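(* Let $m$ be a positive integer, let $\delta\in\mathbb{F}_{2^{3m}}$ be fixed and let $c\in\mathbb{F}_{2^m}^*$. Then the polynomial \[ f(x)=(x^{2^m}+x+\delta)^{2^{2m}+1}+cx \] is a permutation polynomial of $\mathbb{F}_{2^{3m}}$.
   Context: A polynomial $f\in\mathbb{F}_Q[x]$ is a permutation polynomial of $\mathbb{F}_Q$ if the map $c\mapsto f(c)$ is a bijection of $\mathbb{F}_Q$. $\mathbb{F}_{2^m}$ is viewed as the subfield of $\mathbb{F}_{2^{3m}}$. *)

From HB Require Import structures.
From mathcomp Require Import all_boot all_order all_algebra all_field.
Set Implicit Arguments. Unset Strict Implicit. Unset Printing Implicit Defensive.
Import GRing.Theory.
Local Open Scope ring_scope.

Definition is_perm_poly (F : finFieldType) (p : {poly F}) : Prop :=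
  bijective (fun c : F => p.[c]).

Definition in_subfield (F : finFieldType) (q : nat) (x : F) : bool :=
  x ^+ q == x.

From HB Require Import structures.
From mathcomp Require Import all_boot all_order all_algebra all_field.
From mathcomp Require Import ring.
Set Implicit Arguments. Unset Strict Implicit. Unset Printing Implicit Defensive.
Import GRing.Theory.
Local Open Scope ring_scope.

(* Write q = 2^m and let s : x |-> x^q, an automorphism of
   F = F_{q^3} of order 3 that fixes c.  With Y = s x + x + delta we have
   f(x) = s^2(Y) * Y + c x, since Y^(q^2) = s^2(Y).  Put
     h(Y) = c Y + Y s(Y) + Y s^2(Y)      and   Tr(Y) = Y + s(Y) + s^2(Y).
   Then (1) h(Y) = s(f x) + f x + c delta, so f x1 = f x2 forces
   h(Y1) = h(Y2); (2) h is injective: Tr(h Y) = c Tr(Y) gives Tr Y1 = Tr Y2 =: T,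
   and h(Y) = Y^2 + (T + c) Y then yields Y1 = Y2 or Y2 = Y1 + (T + c); in the
   latter case taking traces gives T + c = 0.  From Y1 = Y2 the definition of f
   gives c x1 = c x2, so f is injective, hence bijective on the finite field. *)

Section OrderThreeAutomorphism.
Variables (F : fieldType) (s : F -> F).
Hypothesis char2 : 2 \in [pchar F].
Hypothesis sD : forall x y, s (x + y) = s x + s y.
Hypothesis sM : forall x y, s (x * y) = s x * s y.
Hypothesis s3 : forall x, s (s (s x)) = x.
Variables (c delta : F).
Hypothesis sc : s c = c.
Hypothesis c_neq0 : c != 0.

(* In characteristic 2 doubled terms vanish; this lets [ring], which does not
   know the characteristic, prove identities up to a multiple of 2. *)
Lemma eq_up_to_double (a b k : F) : a = b + (k + k) -> a = b.
Proof. by rewrite (addrr_pchar2 char2) addr0. Qed.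

Definition trace3 (Y : F) : F := Y + s Y + s (s Y).

Lemma trace3D (Y Z : F) : trace3 (Y + Z) = trace3 Y + trace3 Z.
Proof. by rewrite /trace3 !sD; ring. Qed.

Lemma trace3_fixed (Y : F) : s (trace3 Y) = trace3 Y.
Proof. by rewrite /trace3 !sD s3; ring. Qed.

(* On s-fixed elements the trace is multiplication by 3 = 1. *)
Lemma trace3_of_fixed (Y : F) : s Y = Y -> trace3 Y = Y.
Proof. by move=> sY; rewrite /trace3 !sY; apply: (eq_up_to_double (k := Y)); ring. Qed.

Definition hmap (Y : F) : F := c * Y + Y * s Y + Y * s (s Y).

(* Tr(Y s(Y) + Y s^2(Y)) is twice the sum of the pairwise products of the
   conjugates of Y, hence 0; so h multiplies traces by c. *)
Lemma trace3_hmap (Y : F) : trace3 (hmap Y) = c * trace3 Y.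
Proof.
rewrite /trace3 /hmap !sD !sM !s3 !sc.
by apply: (eq_up_to_double (k := (Y * s Y + Y * s (s Y) + s Y * s (s Y)))); ring.
Qed.

(* h is a quadratic polynomial in Y once the trace of Y is fixed. *)
Lemma hmap_quadratic (Y : F) : hmap Y = Y * Y + (trace3 Y + c) * Y.
Proof. by rewrite /hmap /trace3; apply: (eq_up_to_double (k := (- (Y * Y)))); ring. Qed.

(* Equal values of h force equal traces, hence Y1 = Y2 or Y2 = Y1 + t with
   t = Tr Y1 + c fixed by s; comparing traces in the second case gives t = 0. *)
Lemma hmap_inj : injective hmap.
Proof.
move=> Y1 Y2 hY.
have tr12 : trace3 Y1 = trace3 Y2 by apply: (mulfI c_neq0); rewrite -!trace3_hmap hY.
set t := trace3 Y1 + c.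
have st : s t = t by rewrite /t sD trace3_fixed sc.
have : (Y1 - Y2) * (Y1 + Y2 + t) = 0.
  have -> : (Y1 - Y2) * (Y1 + Y2 + t) = hmap Y1 - hmap Y2.
    by rewrite !hmap_quadratic -tr12 /t; ring.
  by rewrite hY subrr.
move/eqP; rewrite mulf_eq0 subr_eq0 => /orP[/eqP // | /eqP sum0].
have Y2E : Y2 = Y1 + t.
  by apply: (eq_up_to_double (k := Y2)); rewrite -[LHS]add0r -sum0; ring.
have t0 : t = 0.
  have : trace3 Y1 + t = trace3 Y1 by rewrite -{1}(trace3_of_fixed st) -trace3D -Y2E.
  by rewrite -{2}[trace3 Y1]addr0 => /addrI.
by rewrite Y2E t0 addr0.
Qed.

Definition fmap (x : F) : F :=
  s (s (s x + x + delta)) * (s x + x + delta) + c * x.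

Lemma hmap_fmap (x : F) : hmap (s x + x + delta) = s (fmap x) + fmap x + c * delta.
Proof.
rewrite /hmap /fmap; set Y := s x + x + delta.
have YE : Y = s x + x + delta by [].
by clearbody Y; rewrite !sD !sM s3 sc {1}YE; ring.
Qed.

Lemma fmap_inj : injective fmap.
Proof.
move=> x1 x2 fx.
have YE : s x1 + x1 + delta = s x2 + x2 + delta.
  by apply: hmap_inj; rewrite !hmap_fmap fx.
by move: fx; rewrite /fmap YE => /addrI /(mulfI c_neq0).
Qed.

End OrderThreeAutomorphism.

Section FrobeniusPower.
Variables (F : finFieldType) (m : nat).
Hypothesis card_F : #|F| = (2 ^ (3 * m))%N.

Lemma char2_of_card : 2 \in [pchar F].
Proof. exact: card_finPcharP card_F _. Qed.

Definition frob (x : F) : F := x ^+ (2 ^ m).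

Lemma frobD (x y : F) : frob (x + y) = frob x + frob y.
Proof.
apply: exprDn_pchar; rewrite pnatX (eq_pnat _ (pcharf_eq char2_of_card)).
by rewrite pnat_id.
Qed.

Lemma frobM (x y : F) : frob (x * y) = frob x * frob y.
Proof. exact: exprMn. Qed.

Lemma frob3 (x : F) : frob (frob (frob x)) = x.
Proof.
rewrite /frob -!exprM -!expnD.
have -> : (m + (m + m) = 3 * m)%N by rewrite !mulSn mul0n addn0.
by rewrite -card_F expf_card.
Qed.

(* Evaluation of the polynomial: the exponent 2^(2m) + 1 splits as frob^2 * id. *)
Lemma horner_perm_poly (delta c x : F) :
  (('X ^+ (2 ^ m) + 'X + delta%:P) ^+ (2 ^ (2 * m) + 1) + c *: 'X).[x]
  = fmap frob c delta x.
Proof. by rewrite !hornerE mul2n -addnn expnD exprD expr1 exprM /fmap /frob; ring. Qed.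

End FrobeniusPower.

Theorem proposition1 (F : finFieldType) (m : nat) (hm : (0 < m)%N)
  (hF : #|F| = (2 ^ (3 * m))%N) (delta c : F)
  (hc : in_subfield (2 ^ m) c) (hc0 : c != 0) :
  is_perm_poly
    (('X ^+ (2 ^ m) + 'X + delta%:P) ^+ (2 ^ (2 * m) + 1) + c *: 'X).
Proof.
apply: injF_bij => x1 x2; rewrite /= !horner_perm_poly.
exact: (fmap_inj (char2_of_card hF) (frobD hF) (@frobM F m) (frob3 hF)
  (eqP hc) hc0).
Qed.
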